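(* Let $A$ be a finite set with $|A|\ge 2$ and $n\ge 2$. Then $\mathrm{Alt}(A^n)$ is not fast: there exists $g\in\mathrm{Alt}(A^n)$ with $\mathcal{L}(g,\mathrm{Alt}(A^n)\cap\mathcal{I})\ne\mathcal{L}(g,\mathcal{I})$.
   Context: Any $f\in\mathrm{Sym}(A^n)$ is written $f(x)=(f_1(x),\ldots,f_n(x))$ with coordinate functions $f_i:A^n\to A$; the $i$-th coordinate function is trivial if $f_i(x)=x_i$ for all $x$. An instruction is a permutation of $A^n$ with at most one nontrivial coordinate function (the identity counts as an instruction); $\mathcal{I}$ denotes the set of all instructions. For a set $\mathcal{J}\subseteq\mathcal{I}$ and $g\in\mathrm{Sym}(A^n)$, $\mathcal{L}(g,\mathcal{J})$ is the smallest $L$ such that $g=g^{(L)}\circ\cdots\circ g^{(1)}$ with all $g^{(k)}\in\mathcal{J}$ (taken to be $\infty$ if no such expression exists). A subgroup $K\le\mathrm{Sym}(A^n)$ is called fast if $\mathcal{L}(g,K\cap\mathcal{I})=\mathcal{L}(g,\mathcal{I})$ for all $g\in K$. *)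

From mathcomp Require Import all_boot all_order all_fingroup all_solvable.
From Stdlib Require Import ClassicalEpsilon.
Set Implicit Arguments. Unset Strict Implicit. Unset Printing Implicit Defensive.

Definition hcube (A : finType) (n : nat) : finType := {ffun 'I_n -> A}.

Definition nontriv_coords (A : finType) (n : nat) (f : {perm (hcube A n)}) : {set 'I_n} :=
  [set i : 'I_n | [exists x : hcube A n, f x i != x i]].

Definition instructions (A : finType) (n : nat) : {set {perm (hcube A n)}} :=
  [set f | #|nontriv_coords f| <= 1].

(* g = g^(L) o ... o g^(1) with all g^(k) in J.  In MathComp, (s * t) x = t (s x),
   so the composition g^(L) o ... o g^(1) is the product g^(1) * ... * g^(L). *)
Definition expressible (T : finType) (J : {set {perm T}}) (g : {perm T}) (L : nat) : bool :=
  [exists t : L.-tuple {perm T},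
     all (fun h => h \in J) t && (g == \prod_(h <- t) h)%g].

(* L(g, J): Some L for the smallest such L, None standing for infinity *)
Definition Lcost (T : finType) (J : {set {perm T}}) (g : {perm T}) : option nat :=
  match excluded_middle_informative (exists L, expressible J g L) with
  | left H => Some (ex_minn H)
  | right _ => None
  end.

From mathcomp Require Import all_boot all_order all_fingroup all_solvable.
From Stdlib Require Import ClassicalEpsilon.
Set Implicit Arguments. Unset Strict Implicit. Unset Printing Implicit Defensive.

(* With a = (a0,...,a0), b = a with coordinate i set to a1 and c = b with coordinate j
   set to a1, the 3-cycle g = (a b)(b c) is even and a product of two instructions.
   Since g moves a in both coordinates i and j, a product of two instructions equal to g
   must change coordinate i in one factor and j in the other.  If the i-factor comes first
   it is forced to be the odd transposition (a b); if it comes second, the first factor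
   maps b and c to the same point.  As the identity is an even instruction, shorter
   products pad to length 2, so L(g, Alt ∩ I) > 2 = L(g, I). *)

Section Expressible.

Variables (T : finType) (J : {set {perm T}}).

Lemma expressibleS (g : {perm T}) (m : nat) :
  1%g \in J -> expressible J g m -> expressible J g m.+1.
Proof.
move=> J1 /existsP[t /andP[tJ /eqP->]]; apply/existsP; exists [tuple of 1%g :: t].
by rewrite /= J1 tJ big_cons mul1g eqxx.
Qed.

Lemma expressible_leq (g : {perm T}) (m k : nat) :
  1%g \in J -> k <= m -> expressible J g k -> expressible J g m.
Proof.
move=> J1; elim: m => [|m IHm]; first by rewrite leqn0 => /eqP->.
by rewrite leq_eqVlt ltnS => /predU1P[->//|/IHm gk /gk]; apply: expressibleS.
Qed.

Lemma expressible2P (g : {perm T}) :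
  reflect (exists h1 h2, [/\ h1 \in J, h2 \in J & g = (h1 * h2)%g])
          (expressible J g 2).
Proof.
apply: (iffP existsP) => [[t]|[h1 [h2 [h1J h2J ->]]]]; last first.
  by exists [tuple h1; h2]; rewrite /= h1J h2J !big_cons big_nil mulg1 eqxx.
case: t => -[|h1 [|h2 []]] //= _ /andP[/and3P[h1J h2J _] /eqP->].
by exists h1, h2; rewrite !big_cons big_nil mulg1.
Qed.

End Expressible.

Lemma Lcost_neq (T : finType) (J1 J2 : {set {perm T}}) (g : {perm T}) (m : nat) :
  1%g \in J1 -> expressible J2 g m -> ~~ expressible J1 g m ->
  Lcost J1 g <> Lcost J2 g.
Proof.
move=> J1_1 g2m g1m; rewrite /Lcost.
case: excluded_middle_informative => [ex1|_]; last first.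
  by case: excluded_middle_informative => // -[]; exists m.
case: excluded_middle_informative => [ex2 [E]|[]]; last by exists m.
case: (ex_minnP ex2) E => k _ min2; case: (ex_minnP ex1) => k1 g1k _ Ek.
by move: g1m; rewrite (expressible_leq J1_1 (min2 m g2m)) // -Ek.
Qed.

Section Coordinates.

Variables (A : finType) (n : nat).
Implicit Types (x : hcube A n) (h : {perm hcube A n}) (i j k : 'I_n) (v : A).

Definition moves_only h i := forall x k, k != i -> h x k = x k.

Definition upd x i v : hcube A n := [ffun k => if k == i then v else x k].

Lemma upd_same x i v : upd x i v i = v.
Proof. by rewrite ffunE eqxx. Qed.

Lemma upd_other x i v k : k != i -> upd x i v k = x k.
Proof. by rewrite ffunE => /negPf->. Qed.

Lemma upd_id x i : upd x i (x i) = x.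
Proof. by apply/ffunP => k; rewrite ffunE; case: eqP => [->|]. Qed.

Lemma upd_upd x i v w : upd (upd x i v) i w = upd x i w.
Proof. by apply/ffunP => k; rewrite !ffunE; case: eqP. Qed.

Lemma instructionP (i0 : 'I_n) h :
  reflect (exists i, moves_only h i) (h \in instructions A n).
Proof.
have moved x k : h x k != x k -> k \in nontriv_coords h.
  by move=> hxk; rewrite inE; apply/existsP; exists x.
apply: (iffP idP) => [|[i hi]]; rewrite inE; last first.
  rewrite -(cards1 i) subset_leq_card //.
  apply/subsetP => k; rewrite !inE => /existsP[x].
  by apply: contraR => /hi->; rewrite eqxx.
case: (set_0Vmem (nontriv_coords h)) => [E|[i Hi] card_le1].
  by exists i0 => x k _; apply/eqP/negPn/negP => /moved; rewrite E inE.
exists i => x k ki; apply/eqP/negPn/negP => /moved Hk.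
suff : #|[set i; k]| <= 1 by rewrite cards2 eq_sym ki.
apply: leq_trans card_le1; apply: subset_leq_card.
by apply/subsetP => y; rewrite in_set2 => /orP[]/eqP->.
Qed.

Lemma moves_only_tperm_upd x i v : moves_only (tperm x (upd x i v)) i.
Proof. by move=> y k ki; case: tpermP => [->|->|//]; rewrite ?upd_other. Qed.

Section Product.

Variables (h1 h2 : {perm hcube A n}) (i j : 'I_n).
Hypotheses (h1i : moves_only h1 i) (h2j : moves_only h2 j).

Lemma moves_only_mul x k : (h1 * h2)%g x k != x k -> k = i \/ k = j.
Proof.
rewrite permM; have [->|ki] := eqVneq k i; first by left.
by have [->|kj] := eqVneq k j; [right | rewrite h2j // h1i // eqxx].
Qed.

Lemma moves_only_mulE x : i != j -> h1 x = upd x i ((h1 * h2)%g x i).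
Proof.
move=> ij; apply/ffunP => k; rewrite ffunE permM.
by case: eqVneq => [->|ki]; [rewrite h2j | rewrite h1i].
Qed.

End Product.

End Coordinates.

Section ThreeCycle.

Variables (A : finType) (n : nat) (i j : 'I_n) (a0 a1 : A).
Hypotheses (ij : i != j) (a01 : a0 != a1).

Let a : hcube A n := [ffun => a0].
Let b := upd a i a1.
Let c := upd b j a1.

Definition three_cycle : {perm hcube A n} := (tperm a b * tperm b c)%g.
Local Notation g := three_cycle.

Let ji : j != i. Proof. by rewrite eq_sym. Qed.
Let ci : c i = a1. Proof. by rewrite upd_other // upd_same. Qed.
Let cj : c j = a1. Proof. exact: upd_same. Qed.
Let bj : b j = a0. Proof. by rewrite upd_other // ffunE. Qed.

Let ab : a != b.
Proof. by apply: contraNneq a01 => /ffunP/(_ i); rewrite upd_same ffunE => ->. Qed.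
Let bc : b != c.
Proof. by apply: contraNneq a01 => /ffunP/(_ j); rewrite cj bj => ->. Qed.
Let ac : a != c.
Proof. by apply: contraNneq a01 => /ffunP/(_ i); rewrite ci ffunE => ->. Qed.

Let ga : g a = c. Proof. by rewrite permM !tpermL. Qed.
Let gb : g b = a. Proof. by rewrite permM tpermR tpermD // eq_sym. Qed.
Let gc : g c = b. Proof. by rewrite permM (tpermD ac bc) tpermR. Qed.

Let g_coord_i x : x != a -> x != b -> g x i = x i.
Proof.
move=> xa xb; have [->|xc] := eqVneq x c; first by rewrite gc ci upd_same.
by rewrite permM !tpermD // eq_sym.
Qed.

Lemma three_cycle_Alt : g \in Alt (hcube A n).
Proof. by rewrite Alt_even odd_permM !odd_tperm ab bc. Qed.

Lemma three_cycle_instructions2 : expressible (instructions A n) g 2.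
Proof.
apply/expressible2P; exists (tperm a b), (tperm b c); split=> //.
  by apply/(instructionP i); exists i; apply: moves_only_tperm_upd.
by apply/(instructionP i); exists j; apply: moves_only_tperm_upd.
Qed.

Lemma three_cycle_first_factor (h1 h2 : {perm hcube A n}) :
  moves_only h1 i -> moves_only h2 j -> (h1 * h2)%g = g -> h1 = tperm a b.
Proof.
move=> h1i h2j gE; apply/permP => x; rewrite (moves_only_mulE h1i h2j) // gE.
have [->|xa] := eqVneq x a; first by rewrite ga ci tpermL.
have [->|xb] := eqVneq x b; first by rewrite gb upd_upd upd_id tpermR.
by rewrite g_coord_i // upd_id tpermD // eq_sym.
Qed.

(* [b] and [c] differ only at coordinate [j], where [g b] and [g c] agree, so [h1] identifies them. *)
Lemma three_cycle_reversed_factors (h1 h2 : {perm hcube A n}) :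
  moves_only h1 j -> moves_only h2 i -> (h1 * h2)%g <> g.
Proof.
move=> h1j h2i gE; have h1E x := moves_only_mulE h1j h2i x ji.
suff : h1 b = h1 c by move/perm_inj/eqP; rewrite (negPf bc).
by rewrite !h1E gE gb gc bj ffunE upd_upd.
Qed.

Lemma three_cycle_not_Alt_instructions2 :
  ~~ expressible (Alt (hcube A n) :&: instructions A n) g 2.
Proof.
apply/expressible2P => -[h1 [h2 [/setIP[h1Alt /(instructionP i)[k h1k]]]]].
move=> /setIP[_ /(instructionP i)[l h2l]] gE.
have cover m : c m != a m -> m = k \/ m = l.
  by move=> cam; apply: (moves_only_mul h1k h2l (x := a)); rewrite -gE ga.
have [ci_a cj_a] : c i != a i /\ c j != a j by rewrite ci cj !ffunE eq_sym.
have [ik|il] := cover i ci_a; have [jk|jl] := cover j cj_a.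
- by move: ij; rewrite ik jk eqxx.
- move: h1k h2l gE h1Alt; rewrite -ik -jl => h1i h2j gE.
  by rewrite (three_cycle_first_factor h1i h2j (esym gE)) Alt_even odd_tperm ab.
- move: h1k h2l gE; rewrite -il -jk => h1j h2i gE.
  exact: three_cycle_reversed_factors h1j h2i (esym gE).
- by move: ij; rewrite il jl eqxx.
Qed.

End ThreeCycle.

Theorem proposition3 (A : finType) (n : nat) :
  2 <= #|A| -> 2 <= n ->
  exists g : {perm (hcube A n)},
    g \in Alt (hcube A n) /\
    Lcost (Alt (hcube A n) :&: instructions A n) g <> Lcost (instructions A n) g.
Proof.
case/card_gt1P => a0 [a1 [_ _ a01]] n_gt1.
pose i : 'I_n := Ordinal (ltnW n_gt1); pose j : 'I_n := Ordinal n_gt1.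
have ij : i != j by [].
exists (three_cycle i j a0 a1); split; first exact: three_cycle_Alt.
apply: (Lcost_neq (m := 2)).
- by rewrite inE group1; apply/(instructionP i); exists i => x k _; rewrite perm1.
- exact: three_cycle_instructions2.
- exact: three_cycle_not_Alt_instructions2.
Qed.
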